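(* Let $(\Delta_1,\dots,\Delta_K)\in(0,1/4]^K$. For any algorithm $\mathbb{A}$ and any time horizon $T\ge K$, there exists an instance $I\in\mathcal{I}_{\Delta_1,\dots,\Delta_K}$ such that \[ \mathcal{R}^{\mathbb{A}}(I;T)\ge \frac14\,\mathscr{P}_{16}(\{\Delta_i\}_{i=1}^K,T). \]
   Context: Thresholding bandit problem: an instance consists of a threshold $\theta\in(0,1)$ and $K$ arms, arm $i$ having a reward distribution supported on $[0,1]$ with mean $\theta_i$. An algorithm sequentially pulls arms for $T$ rounds, each pull of arm $i$ yielding an independent sample of its distribution, and the choice of the arm at each round may depend on past observations (and internal randomness); after $T$ rounds it outputs $d\in\{0,1\}^K$. Arm $i$ is misclassified if $d_i=1$ but $\theta_i<\theta$, or $d_i=0$ but $\theta_i\ge\theta$. The aggregate regret $\mathcal{R}^{\mathbb{A}}(I;T)$ is the expected number of misclassified arms. $\mathcal{I}_{\Delta_1,\dots,\Delta_K}$ is the set of $K$-armed instances with $|\theta_i-\theta|=\Delta_i$ for all $i$. For $c>0$, $\mathscr{P}_c(\{\Delta_i\}_{i=1}^K,T)=\min\{\sum_{i=1}^K\exp(-c x_i\Delta_i^2): x_1+\dots+x_K=T,\ x_i\ge0\}$. *)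

From mathcomp Require Import all_boot all_order all_algebra.
From mathcomp Require Import all_classical all_reals all_analysis.
Set Implicit Arguments. Unset Strict Implicit. Unset Printing Implicit Defensive.
Import Order.TTheory GRing.Theory Num.Theory.
Local Open Scope classical_set_scope.
Local Open Scope ring_scope.

Section Bandit.
Variable R : realType.

(* Measurable space of reward histories of length t: R^t as the iterated
   product ((unit * R) * R) * ... * R with the product sigma-algebras. *)
Fixpoint Hist (t : nat) : {d : measure_display & measurableType d} :=
  match t with
  | 0 => existT _ _ (unit : measurableType _)
  | t.+1 => existT _ _ ((projT2 (Hist t) * (R : measurableType _))%type
                          : measurableType _)
  end.
Definition rhist (t : nat) : measurableType _ := projT2 (Hist t).

Variable K : nat.

(* After t rounds, the history
   consists of the t arms pulled so far (a t-tuple) and the t observed rewards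
   (an element of rhist t).
   - pol t a h i : probability that the next pull is arm i;
   - dec t a h d : probability of outputting d in {0,1}^K after t rounds. *)
Record algorithm := Algorithm {
  pol : forall t : nat, t.-tuple 'I_K -> rhist t -> 'I_K -> R ;
  dec : forall t : nat, t.-tuple 'I_K -> rhist t -> {ffun 'I_K -> bool} -> R }.
Arguments pol : clear implicits.
Arguments dec : clear implicits.

Definition valid_algorithm (A : algorithm) : Prop :=
  (forall t a h i, 0 <= pol A t a h i) /\
  (forall t a h, \sum_(i < K) pol A t a h i = 1) /\
  (forall t a i, measurable_fun [set: rhist t] (fun h => pol A t a h i)) /\
  (forall t a h d, 0 <= dec A t a h d) /\
  (forall t a h, \sum_(d : {ffun 'I_K -> bool}) dec A t a h d = 1) /\
  (forall t a d, measurable_fun [set: rhist t] (fun h => dec A t a h d)).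

Definition mean (P : probability R R) : R := fine (\int[P]_x (x%:E))%E.

Definition instance_in (Delta : 'I_K -> R) (theta : R)
    (P : 'I_K -> probability R R) : Prop :=
  [/\ 0 < theta < 1,
      (forall i, P i (~` `[0, 1]) = 0%E) &
      (forall i, `|mean (P i) - theta| = Delta i)].

Definition misclassified (theta : R) (P : 'I_K -> probability R R)
    (d : {ffun 'I_K -> bool}) (i : 'I_K) : bool :=
  (d i && (mean (P i) < theta)) || (~~ d i && (theta <= mean (P i))).

Definition nb_misclassified theta P d : R :=
  (#|[set i | misclassified theta P d i]|)%:R.

Section Run.
Variables (A : algorithm) (theta : R) (P : 'I_K -> probability R R).

Definition final_loss (t : nat) (a : t.-tuple 'I_K) (h : rhist t) : \bar R :=
  (\sum_(d : {ffun 'I_K -> bool}) (dec A t a h d)%:E * (nb_misclassified theta P d)%:E)%E.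

(* expected final loss when n more rounds are played from history (a, h) *)
Fixpoint run (n : nat) : forall t : nat, t.-tuple 'I_K -> rhist t -> \bar R :=
  match n with
  | 0 => fun t a h => @final_loss t a h
  | n.+1 => fun t a h =>
      (\sum_(i < K) (pol A t a h i)%:E *
          \int[P i]_y @run n t.+1 (rcons_tuple a i) ((h, y) : rhist t.+1))%E
  end.
End Run.
Arguments run : clear implicits.

Definition regret (A : algorithm) (theta : R) (P : 'I_K -> probability R R)
    (T : nat) : \bar R :=
  run A theta P T 0 [tuple] tt.

Definition scrP (c : R) (Delta : 'I_K -> R) (T : nat) : R :=
  inf [set \sum_(i < K) expR (- (c * x i * Delta i ^+ 2)) |
        x in [set x : 'I_K -> R | (forall i, 0 <= x i) /\ \sum_(i < K) x i = T%:R]].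

End Bandit.

From HB Require Import structures.
From mathcomp Require Import all_boot all_order all_algebra.
From mathcomp Require Import all_classical all_reals all_analysis.
From mathcomp Require Import measurable_realfun ring lra.
Import Order.TTheory GRing.Theory Num.Theory.
Local Open Scope ring_scope.

(* Take theta = 1/2 and, for every sign vector s in {0,1}^K, the instance whose
   arm j is Bernoulli with mean 1/2 + Delta_j or 1/2 - Delta_j according to s_j.
   Let s' be s with bit i flipped.  Whatever the algorithm does, the laws of the
   whole history under s and s' have Bhattacharyya coefficient at least
   exp (-8 Delta_i^2 (N_i + N'_i)), where N_i, N'_i are the expected numbers of
   pulls of arm i (the Bernoulli KL divergence between the two means of arm i
   is at most 16 Delta_i^2), and half its square bounds from below the sum of
   the probabilities of misclassifying arm i under s and s' (Bretagnolle-Huber).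
   Averaging over all s with Jensen's inequality gives, for each arm i,
   exp (-16 x_i Delta_i^2) / 4, where x_i is the average number of pulls of
   arm i; since the x_i sum to T, the average regret is at least P_16 / 4, and
   some s does at least as well as the average. *)

Section RealFacts.
Context {R : realType}.

Lemma jensen_expR (I : finType) (w z : I -> R) :
  (forall i, 0 <= w i) -> \sum_i w i = 1 ->
  expR (\sum_i w i * z i) <= \sum_i w i * expR (z i).
Proof.
move=> w_ge0 w_sum1; set m := \sum_i w i * z i.
have -> : \sum_i w i * expR (z i) = expR m * \sum_i w i * expR (z i - m).
  rewrite mulr_sumr; apply: eq_bigr => i _; rewrite expRB.
  by field; rewrite gt_eqF ?expR_gt0.
rewrite -[leLHS]mulr1 ler_pM2l ?expR_gt0 //.
apply: le_trans (ler_sum _ (fun i _ => ler_wpM2l (w_ge0 i) (expR_ge1Dx (z i - m)))).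
rewrite (eq_bigr (fun i => w i + (w i * z i - m * w i))) => [|i _]; last by ring.
by rewrite big_split sumrB -mulr_sumr /= w_sum1 mulr1 subrr addr0.
Qed.

Lemma jensen_expR2 (p x y : R) : 0 <= p <= 1 ->
  expR (p * x + (1 - p) * y) <= p * expR x + (1 - p) * expR y.
Proof.
move=> /andP[p_ge0 p_le1].
have := @jensen_expR bool (fun b => if b then p else 1 - p)
  (fun b => if b then x else y).
by rewrite !big_bool; apply=> [[]|] /=; rewrite ?subr_ge0 // addrC subrK.
Qed.

Definition bern_kl (p q : R) : R :=
  p * ln (p / q) + (1 - p) * ln ((1 - p) / (1 - q)).

Lemma bern_klxx p : bern_kl p p = 0.
Proof.
have xlnxx x : x * ln (x / x) = 0.
  by have [->|x_neq0] := eqVneq x 0; rewrite ?mul0r // divff // ln1 mulr0.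
by rewrite /bern_kl !xlnxx addr0.
Qed.

Lemma mul_sub_ln_le (a b : R) : 1/4 <= a -> 1/4 <= b ->
  (a - b) * (ln a - ln b) <= 4 * (a - b) ^+ 2.
Proof.
wlog ba : a b / b <= a => [hwlog a4 b4|a4 b4].
  have [ba|/ltW ab] := leP b a; first exact: hwlog.
  by rewrite -[a - b]opprB -[ln a - ln b]opprB mulrNN sqrrN hwlog.
have b_gt0 : 0 < b by apply: lt_le_trans b4; lra.
have ab_ge0 : 0 <= a - b by rewrite subr_ge0.
rewrite expr2 [4 * _]mulrCA ler_wpM2l //.
rewrite -ln_div ?posrE ?(lt_le_trans b_gt0) //.
have -> : a / b = 1 + (a - b) / b by field; rewrite gt_eqF.
have ab_div_ge0 : 0 <= (a - b) / b := divr_ge0 ab_ge0 (ltW b_gt0).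
apply: le_trans (le_ln1Dx _) _; first lra.
by rewrite ler_pdivrMr //; nra.
Qed.

Lemma bern_kl_sym_le (p q : R) : 1/4 <= p <= 3/4 -> 1/4 <= q <= 3/4 ->
  bern_kl p q + bern_kl q p <= 8 * (p - q) ^+ 2.
Proof.
move=> /andP[p_ge p_le] /andP[q_ge q_le].
have pos (x : R) : 1/4 <= x -> x \is Num.pos by move=> x4; rewrite posrE; lra.
rewrite /bern_kl !ln_div ?pos //; try lra.
have := @mul_sub_ln_le p q p_ge q_ge.
have := @mul_sub_ln_le (1 - p) (1 - q) ltac:(lra) ltac:(lra).
have -> : (1 - p - (1 - q)) ^+ 2 = (p - q) ^+ 2 by rewrite -sqrrN; congr (_ ^+ 2); ring.
lra.
Qed.

Lemma bern_kl_flip_le (p : R) : 1/4 <= p <= 3/4 ->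
  bern_kl p (1 - p) <= 4 * (2 * p - 1) ^+ 2.
Proof.
move=> p_bd; have p'_bd : 1/4 <= 1 - p <= 3/4 by move: p_bd => /andP[]; lra.
have := @bern_kl_sym_le p (1 - p) p_bd p'_bd.
have -> : bern_kl (1 - p) p = bern_kl p (1 - p).
  by rewrite /bern_kl (_ : 1 - (1 - p) = p) 1?addrC //; ring.
have -> : p - (1 - p) = 2 * p - 1 by ring.
lra.
Qed.

Lemma ln_sqrtM_div (x y : R) : 0 < x -> 0 < y ->
  ln (Num.sqrt (x * y) / x) = - ln (x / y) / 2.
Proof.
move=> x_gt0 y_gt0.
have sq_gt0 : 0 < Num.sqrt (x * y) by rewrite sqrtr_gt0 mulr_gt0.
have lnsq : ln (Num.sqrt (x * y)) = (ln x + ln y) / 2.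
  have := lnXn 2 sq_gt0; rewrite sqr_sqrtr ?mulr_ge0 ?ltW // lnM ?posrE // => ->.
  by rewrite mulr2n; field.
by rewrite !ln_div ?posrE // lnsq; field.
Qed.

Lemma amgm_le (u l : R) : 0 <= u -> 0 < l -> 2 * u <= l * u + u / l.
Proof.
move=> u_ge0 l_gt0; rewrite -subr_ge0.
have -> : l * u + u / l - 2 * u = u * (l - 1) ^+ 2 / l by field; rewrite gt_eqF.
by apply: divr_ge0; [rewrite mulr_ge0 ?sqr_ge0 | exact: ltW].
Qed.

Lemma sqrt_mul_amgm (x y l m B X X' Y Y' : R) :
  0 < x -> 0 < y -> 0 < l -> 0 < m ->
  (forall l' m', 0 < l' -> 0 < m' -> 2 * B <= l' * X + X' / l' + m' * Y + Y' / m') ->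
  2 * (Num.sqrt (x * y) * B) <= l * x * X + y * X' / l + m * y * Y + x * Y' / m.
Proof.
move=> x_gt0 y_gt0 l_gt0 m_gt0 hB; set w := Num.sqrt (x * y).
have w_gt0 : 0 < w by rewrite sqrtr_gt0 mulr_gt0.
have ww : w ^+ 2 = x * y by rewrite sqr_sqrtr // mulr_ge0 ?ltW.
have := hB (l * x / w) (m * y / w) (divr_gt0 (mulr_gt0 l_gt0 x_gt0) w_gt0)
  (divr_gt0 (mulr_gt0 m_gt0 y_gt0) w_gt0).
move=> /(ler_wpM2l (ltW w_gt0)) /le_trans; rewrite mulrCA; apply.
have -> : y = w ^+ 2 / x by rewrite ww; field; rewrite gt_eqF.
by rewrite le_eqVlt; apply/orP; left; apply/eqP; field; rewrite !gt_eqF.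
Qed.

Lemma expR_bern_step (r q c x y : R) : 0 < r < 1 -> 0 < q < 1 ->
  bern_kl r q <= 2 * c ->
  expR (- (c + r * x + (1 - r) * y))
  <= Num.sqrt (r * q) * expR (- x) + Num.sqrt ((1 - r) * (1 - q)) * expR (- y).
Proof.
move=> /andP[r_gt0 r_lt1] /andP[q_gt0 q_lt1] kl_le.
have r'_gt0 : 0 < 1 - r by rewrite subr_gt0.
have q'_gt0 : 0 < 1 - q by rewrite subr_gt0.
have weight (s t : R) : 0 < s -> 0 < t ->
    Num.sqrt (s * t) = s * expR (ln (Num.sqrt (s * t) / s)).
  move=> s_gt0 t_gt0; rewrite lnK ?posrE ?divr_gt0 ?sqrtr_gt0 ?mulr_gt0 //.
  by rewrite mulrCA divff ?mulr1 ?gt_eqF.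
rewrite (weight r q) // (weight (1 - r) (1 - q)) // -!mulrA -!expRD.
have r01 : 0 <= r <= 1 by rewrite !ltW.
apply: le_trans (jensen_expR2 _ _ _ r01); rewrite ler_expR !ln_sqrtM_div //.
move: kl_le; rewrite /bern_kl; lra.
Qed.

End RealFacts.

Section Play.
Variables (R : realType) (K : nat) (A : algorithm R K).

Definition hfun : Type := forall t : nat, t.-tuple 'I_K -> rhist R t -> R.

(* When [w1 j + w0 j = 1], [play c w1 w0 L n t a h] is the expectation, over n
   more rounds played from history (a, h) against arms with Bernoulli rewards of
   means [w1], of the costs [c j] of the arms pulled plus the final value [L];
   other weights give the Bhattacharyya coefficient of two such experiments. *)
Fixpoint play (c w1 w0 : 'I_K -> R) (L : hfun) (n : nat) : hfun :=
  match n with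
  | 0 => L
  | n.+1 => fun t a h => \sum_(j < K) pol A a h j *
      (c j + w1 j * play c w1 w0 L n t.+1 (rcons_tuple a j) ((h, 1) : rhist R t.+1)
           + w0 j * play c w1 w0 L n t.+1 (rcons_tuple a j) ((h, 0) : rhist R t.+1))
  end.

Definition ecost (c r : 'I_K -> R) : nat -> hfun :=
  play c r (fun j => 1 - r j) (fun _ _ _ => 0).
Definition eleaf (r : 'I_K -> R) : hfun -> nat -> hfun :=
  play (fun _ => 0) r (fun j => 1 - r j).
Definition bhatt (r q : 'I_K -> R) : nat -> hfun :=
  play (fun _ => 0) (fun j => Num.sqrt (r j * q j))
    (fun j => Num.sqrt ((1 - r j) * (1 - q j))) (fun _ _ _ => 1).

Lemma play_sum (I : finType) c (cs : I -> 'I_K -> R) w1 w0 (L : hfun) (Ls : I -> hfun)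
    n t a h :
  (forall j, c j = \sum_k cs k j) -> (forall t a h, L t a h = \sum_k Ls k t a h) ->
  play c w1 w0 L n t a h = \sum_k play (cs k) w1 w0 (Ls k) n t a h.
Proof.
move=> c_sum L_sum; elim: n t a h => [|n IH] t a h /=; first exact: L_sum.
rewrite exchange_big; apply: eq_bigr => j _.
by rewrite c_sum !IH -mulr_sumr !big_split -!mulr_sumr.
Qed.

Lemma ecostZ k c r n t a h :
  ecost (fun j => k * c j) r n t a h = k * ecost c r n t a h.
Proof.
rewrite /ecost; elim: n t a h => [|n IH] t a h /=; first by rewrite mulr0.
rewrite mulr_sumr; apply: eq_bigr => j _; rewrite !IH; ring.
Qed.

Lemma bhattC r q n t a h : bhatt q r n t a h = bhatt r q n t a h.
Proof.
have sqrtMC (x y : 'I_K -> R) :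
    (fun j => Num.sqrt (x j * y j)) = (fun j => Num.sqrt (y j * x j)).
  by apply/funext => j; rewrite mulrC.
by rewrite /bhatt sqrtMC [X in play _ _ X]sqrtMC.
Qed.

Hypothesis hA : valid_algorithm A.

Lemma play_ge0 c w1 w0 (L : hfun) n t a h :
  (forall j, 0 <= c j) -> (forall j, 0 <= w1 j) -> (forall j, 0 <= w0 j) ->
  (forall t a h, 0 <= L t a h) -> 0 <= play c w1 w0 L n t a h.
Proof.
case: hA => pol_ge0 _ c_ge0 w1_ge0 w0_ge0 L_ge0.
elim: n t a h => [|n IH] t a h /=; first exact: L_ge0.
by apply: sumr_ge0 => j _; rewrite mulr_ge0 ?addr_ge0 ?mulr_ge0.
Qed.

Lemma play_const c0 l0 w1 w0 n t a h : (forall j, w1 j + w0 j = 1) ->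
  play (fun _ => c0) w1 w0 (fun _ _ _ => l0) n t a h = n%:R * c0 + l0.
Proof.
case: hA => _ [pol_sum1 _] w_sum1.
elim: n t a h => [|n IH] t a h /=; first by rewrite mul0r add0r.
under eq_bigr => j _ do rewrite !IH -addrA -mulrDl w_sum1 mul1r.
by rewrite -big_distrl /= pol_sum1 mul1r mulrSr; ring.
Qed.

Lemma eleaf_le1 r (u v : hfun) n t a h :
  (forall j, 0 <= r j <= 1) -> (forall t a h, 0 <= v t a h) ->
  (forall t a h, u t a h + v t a h = 1) -> eleaf r u n t a h <= 1.
Proof.
move=> r01 v_ge0 uv1.
have <- : \sum_(b : bool) eleaf r (if b then u else v) n t a h = 1.
  rewrite /eleaf -(@play_sum bool (fun _ => 0) _ _ _ (fun _ _ _ => 1)).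
  - by rewrite play_const ?mulr0 ?add0r // => j; rewrite addrC subrK.
  - by move=> j; rewrite big_bool /= addr0.
  - by move=> t' a' h'; rewrite big_bool /= uv1.
rewrite big_bool /= lerDl; apply: play_ge0 => // j; first by case/andP: (r01 j).
by case/andP: (r01 j) => _; rewrite subr_ge0.
Qed.

Section TwoInstances.
Variables (r q : 'I_K -> R).
Hypotheses (r01 : forall j, 0 < r j < 1) (q01 : forall j, 0 < q j < 1).

Lemma bhatt_ge_expR c n t a h : (forall j, bern_kl (r j) (q j) <= 2 * c j) ->
  expR (- ecost c r n t a h) <= bhatt r q n t a h.
Proof.
case: hA => pol_ge0 [pol_sum1 _] kl_le; rewrite /ecost /bhatt.
elim: n t a h => [|n IH] t a h /=; first by rewrite oppr0 expR0.
rewrite -sumrN; under [X in expR X]eq_bigr => j _ do rewrite -mulrN.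
apply: le_trans (jensen_expR _ _ _ (pol_ge0 t a h) (pol_sum1 t a h)) _.
apply: ler_sum => j _; rewrite ler_wpM2l // add0r.
apply: le_trans (expR_bern_step _ _ _ _ _ (r01 j) (q01 j) (kl_le j)) _.
by rewrite lerD // ler_wpM2l ?sqrtr_ge0.
Qed.

(* The Cauchy-Schwarz bound
     bhatt r q <= sqrt (eleaf r u * eleaf q u) + sqrt (eleaf r v * eleaf q v),
   linearized by AM-GM with free weights [l], [m] so that it goes through the
   induction on [n]. *)
Lemma bhatt_le (u v : hfun) n t a h l m :
  (forall t a h, 0 <= u t a h) -> (forall t a h, 0 <= v t a h) ->
  (forall t a h, u t a h + v t a h = 1) -> 0 < l -> 0 < m ->
  2 * bhatt r q n t a h <=
    l * eleaf r u n t a h + eleaf q u n t a h / l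
    + m * eleaf q v n t a h + eleaf r v n t a h / m.
Proof.
move=> u_ge0 v_ge0 uv1; rewrite /eleaf /bhatt.
elim: n t a h l m => [|n IH] t a h l m l_gt0 m_gt0 /=.
  have := uv1 t a h; have := amgm_le _ _ (u_ge0 t a h) l_gt0.
  have := amgm_le _ _ (v_ge0 t a h) m_gt0; lra.
rewrite !mulr_sumr !mulr_suml -!big_split /=; apply: ler_sum => j _.
have [r_gt0 r_lt1] := andP (r01 j); have [q_gt0 q_lt1] := andP (q01 j).
have r'_gt0 : 0 < 1 - r j by rewrite subr_gt0.
have q'_gt0 : 0 < 1 - q j by rewrite subr_gt0.
have branch y := IH _ (rcons_tuple a j) ((h, y) : rhist R t.+1).
have H1 := sqrt_mul_amgm _ _ _ _ _ _ _ _ _ r_gt0 q_gt0 l_gt0 m_gt0 (branch 1).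
have H0 := sqrt_mul_amgm _ _ _ _ _ _ _ _ _ r'_gt0 q'_gt0 l_gt0 m_gt0 (branch 0).
have p_ge0 : 0 <= pol A a h j by case: hA.
have := ler_wpM2l p_ge0 (lerD H1 H0); lra.
Qed.

End TwoInstances.

Lemma bretagnolle_huber (r q c : 'I_K -> R) (u v : hfun) n t a h :
  (forall j, 0 < r j < 1) -> (forall j, 0 < q j < 1) ->
  (forall j, bern_kl (r j) (q j) <= 2 * c j) ->
  (forall j, bern_kl (q j) (r j) <= 2 * c j) ->
  (forall t a h, 0 <= u t a h) -> (forall t a h, 0 <= v t a h) ->
  (forall t a h, u t a h + v t a h = 1) ->
  expR (- (ecost c r n t a h + ecost c q n t a h)) / 2
  <= eleaf r u n t a h + eleaf q v n t a h.
Proof.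
move=> r01 q01 kl_rq kl_qr u_ge0 v_ge0 uv1.
set B := bhatt r q n t a h.
set Ru := eleaf r u n t a h; set Qu := eleaf q u n t a h.
set Qv := eleaf q v n t a h; set Rv := eleaf r v n t a h.
have Br : expR (- ecost c r n t a h) <= B by apply: bhatt_ge_expR.
have Bq : expR (- ecost c q n t a h) <= B by rewrite /B -bhattC; apply: bhatt_ge_expR.
have B_gt0 : 0 < B := lt_le_trans (expR_gt0 _) Br.
have le01 (p : 'I_K -> R) j : (forall j, 0 < p j < 1) -> 0 <= p j <= 1.
  by move=> p01; case/andP: (p01 j) => p_gt0 p_lt1; rewrite !ltW.
have Qu_le1 : Qu <= 1 by apply: eleaf_le1 v_ge0 uv1 => j; apply: le01.
have Rv_le1 : Rv <= 1.
  apply: (@eleaf_le1 r v u _ _ _ _ _ u_ge0) => [j|t' a' h']; first exact: le01.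
  by rewrite addrC.
(* With l = m = 2 / B the two cross terms add up to at most B, which leaves
   B ^+ 2 <= 2 * (Ru + Qv). *)
have l_gt0 : 0 < 2 / B by rewrite divr_gt0.
have := @bhatt_le r q r01 q01 u v n t a h _ _ u_ge0 v_ge0 uv1 l_gt0 l_gt0.
rewrite -/B invf_div.
move=> /(ler_wpM2l (ltW B_gt0)).
have -> : B * (2 / B * Ru + Qu * (B / 2) + 2 / B * Qv + Rv * (B / 2))
    = 2 * (Ru + Qv) + (Qu + Rv) * B ^+ 2 / 2 by field; rewrite gt_eqF.
have := ler_wpM2r (sqr_ge0 B) (lerD Qu_le1 Rv_le1).
have : expR (- ecost c r n t a h) * expR (- ecost c q n t a h) <= B * B.
  by apply: ler_pM; rewrite ?expR_ge0.
rewrite opprD expRD expr2; lra.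
Qed.

End Play.

Arguments play {R K}.
Arguments ecost {R K}.
Arguments eleaf {R K}.

Local Open Scope classical_set_scope.

Section Bernoulli.
Context {R : realType}.

Definition real_of_bool (b : bool) : R := if b then 1 else 0.

Lemma measurable_real_of_bool : measurable_fun [set: bool] real_of_bool.
Proof. by move=> _ Y _; rewrite setTI. Qed.

HB.instance Definition _ :=
  isMeasurableFun.Build _ _ bool R real_of_bool measurable_real_of_bool.

Definition bern (p : R) : probability R R :=
  distribution (bernoulli_prob p) real_of_bool.

Lemma integral_bern (p : R) (f : R -> \bar R) : 0 <= p <= 1 ->
  measurable_fun setT f -> (forall x, 0 <= f x)%E ->
  (\int[bern p]_y f y = p%:E * f 1%R + (1 - p)%:E * f 0%R)%E.
Proof.
move=> p01 mf f_ge0.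
by rewrite ge0_integral_distribution // integral_bernoulli_prob // => b; exact: f_ge0.
Qed.

Lemma bern_notin01 (p : R) : bern p (~` `[0, 1]) = 0%E.
Proof.
rewrite /bern /distribution /pushforward /=.
have -> : real_of_bool @^-1` (~` `[0, 1]) = set0.
  apply/seteqP; split => // b /=; rewrite /real_of_bool in_itv /=.
  by case: b => /=; rewrite ?lexx ?ler01.
exact: measure0.
Qed.

Lemma mean_bern (p : R) : 0 <= p <= 1 -> mean (bern p) = p.
Proof.
move=> p01; rewrite /mean /bern integral_distribution //.
- rewrite integral_bernoulli_prob //=; last by case => /=; rewrite lee_fin ?ler01.
  by rewrite /real_of_bool /= mulr1 mulr0 addr0.
- apply/integrableP; split; first exact/measurable_EFinP.
  rewrite integral_bernoulli_prob //=; try by move=> b; exact: abse_ge0.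
  by rewrite /real_of_bool /= -!EFinM -EFinD ltry.
Qed.

End Bernoulli.

Section RunBernoulli.
Variables (R : realType) (K : nat) (A : algorithm R K).
Hypothesis hA : valid_algorithm A.

Lemma measurable_play c w1 w0 (L : hfun R K) n t a :
  (forall t a, measurable_fun [set: rhist R t] (L t a)) ->
  measurable_fun [set: rhist R t] (play A c w1 w0 L n t a).
Proof.
case: hA => _ [_ [pol_mes _]] L_mes.
elim: n t a => [|n IH] t a //=.
apply: measurable_sum => j; apply: measurable_funM; first exact: pol_mes.
have branch y : measurable_fun [set: rhist R t]
    (fun h => play A c w1 w0 L n t.+1 (rcons_tuple a j) ((h, y) : rhist R t.+1)).
  by apply: measurableT_comp (IH _ _) _; exact: pair2_measurable.
apply: measurable_funD; first apply: measurable_funD; first exact: measurable_cst.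
all: by apply: measurable_funM; [exact: measurable_cst | exact: branch].
Qed.

Variables (theta : R) (r : 'I_K -> R).
Hypothesis r01 : forall j, 0 <= r j <= 1.
Let P j := bern (r j).

Definition expected_loss : hfun R K := fun t a h =>
  \sum_(d : {ffun 'I_K -> bool}) dec A a h d * nb_misclassified theta P d.

Lemma expected_loss_ge0 t a h : 0 <= expected_loss t a h.
Proof.
case: hA => _ [_ [_ [dec_ge0 _]]].
by apply: sumr_ge0 => d _; rewrite mulr_ge0 // ler0n.
Qed.

Lemma measurable_expected_loss t a :
  measurable_fun [set: rhist R t] (expected_loss t a).
Proof.
case: hA => _ [_ [_ [_ [_ dec_mes]]]].
apply: measurable_sum => d; apply: measurable_funM; first exact: dec_mes.
exact: measurable_cst.
Qed.

Lemma run_bern n t a h :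
  run A theta P n a h = (eleaf A r expected_loss n t a h)%:E.
Proof.
rewrite /eleaf; elim: n t a h => [|n IH] t a h /=.
  by rewrite /final_loss -sumEFin; apply: eq_bigr => d _; rewrite EFinM.
rewrite -sumEFin; apply: eq_bigr => j _; under eq_integral do rewrite IH.
rewrite integral_bern // ?add0r -?EFinM //.
- apply/measurable_EFinP/(measurableT_comp (measurable_play _ _ _ _ _ _ _ _)).
  + exact: measurable_expected_loss.
  + exact: pair1_measurable.
- move=> y; rewrite lee_fin; apply: play_ge0 => // [k|k|].
  + by case/andP: (r01 k).
  + by case/andP: (r01 k) => _; rewrite subr_ge0.
  + exact: expected_loss_ge0.
Qed.

End RunBernoulli.

Lemma exists_ge_of_sum_ge {R : realType} {I : finType} (F : I -> R) (x : R) :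
  (0 < #|I|)%N -> #|I|%:R * x <= \sum_i F i -> exists i, x <= F i.
Proof.
move=> /card_gt0P[i0 _] sum_ge; apply/not_existsP => F_lt.
have : \sum_i F i < \sum_(i : I) x.
  apply: ltr_sum => [|i _]; first by apply/hasP; exists i0; rewrite ?mem_index_enum.
  by rewrite ltNge; apply/negP; exact: F_lt.
by rewrite sumr_const -mulr_natl ltNge sum_ge.
Qed.

Section SignedInstances.
Context {R : realType} {K : nat} (Delta : 'I_K -> R).
Hypothesis Delta_bd : forall i, 0 < Delta i <= 1/4.
Variable A : algorithm R K.
Hypothesis hA : valid_algorithm A.
Variable T : nat.

Notation signs := {ffun 'I_K -> bool}.

Definition signed_mean (s : signs) (j : 'I_K) : R :=
  if s j then 1/2 + Delta j else 1/2 - Delta j.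

Definition flip (i : 'I_K) (s : signs) : signs :=
  [ffun j => if j == i then ~~ s j else s j].

Lemma flipK i : involutive (flip i).
Proof.
by move=> s; apply/ffunP => j; rewrite !ffunE; case: eqP => // ->; rewrite negbK.
Qed.

Lemma flip_id i s : flip i s i = ~~ s i.
Proof. by rewrite ffunE eqxx. Qed.

Lemma signed_mean_bd s j : 1/4 <= signed_mean s j <= 3/4.
Proof.
have /andP[] := Delta_bd j; rewrite /signed_mean.
by case: (s j) => ? ?; apply/andP; split; lra.
Qed.

Lemma signed_mean01 s j : 0 < signed_mean s j < 1.
Proof. by have /andP[] := signed_mean_bd s j => ? ?; apply/andP; split; lra. Qed.

Lemma signed_mean_in01 s j : 0 <= signed_mean s j <= 1.
Proof. by have /andP[? ?] := signed_mean01 s j; rewrite !ltW. Qed.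

Lemma signed_mean_flip i s j : signed_mean (flip i s) j =
  if j == i then 1 - signed_mean s j else signed_mean s j.
Proof. by rewrite /signed_mean ffunE; case: eqP => // _; case: (s j) => /=; lra. Qed.

Lemma bern_kl_signed_flip i s (j : 'I_K) :
  bern_kl (signed_mean s j) (signed_mean (flip i s) j)
  <= 2 * (8 * Delta i ^+ 2 * (j == i)%:R).
Proof.
rewrite signed_mean_flip; case: eqP => [->|_]; last by rewrite bern_klxx mulr0 mulr0.
apply: le_trans (bern_kl_flip_le _ (signed_mean_bd s i)) _.
by rewrite mulr1 /signed_mean; case: (s i) => /=; lra.
Qed.

Definition signed_instance (s : signs) : 'I_K -> probability R R :=
  fun j => bern (signed_mean s j).

Lemma signed_instance_in s : instance_in Delta (1/2) (signed_instance s).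
Proof.
split=> [|i|i]; first by apply/andP; split; lra.
- exact: bern_notin01.
- have /andP[d_gt0 _] := Delta_bd i.
  rewrite mean_bern ?signed_mean_in01 // /signed_mean.
  by case: (s i); rewrite addrAC subrr add0r ?normrN gtr0_norm.
Qed.

Definition disagree (i : 'I_K) (b : bool) : hfun R K :=
  fun t a h => \sum_(d : signs) dec A a h d * (d i != b)%:R.

Lemma disagree_ge0 i b t a h : 0 <= disagree i b t a h.
Proof.
case: hA => _ [_ [_ [dec_ge0 _]]].
by apply: sumr_ge0 => d _; rewrite mulr_ge0 // ler0n.
Qed.

Lemma disagree_addN i b t a h : disagree i b t a h + disagree i (~~ b) t a h = 1.
Proof.
case: hA => _ [_ [_ [_ [dec_sum1 _]]]].
rewrite /disagree -big_split -[RHS](dec_sum1 t a h) /=; apply: eq_bigr => d _.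
by case: (d i); case: b; rewrite /= ?mulr0 ?mulr1 ?addr0 ?add0r.
Qed.

Definition err_prob (s : signs) (i : 'I_K) : R :=
  eleaf A (signed_mean s) (disagree i (s i)) T 0 [tuple] tt.
Definition pulls (s : signs) (i : 'I_K) : R :=
  ecost A (fun j => (j == i)%:R) (signed_mean s) T 0 [tuple] tt.

Lemma misclassified_signed s d i :
  misclassified (1/2) (signed_instance s) d i = (d i != s i).
Proof.
have /andP[d_gt0 _] := Delta_bd i.
rewrite /misclassified mean_bern ?signed_mean_in01 // /signed_mean.
case: (s i); case: (d i) => /=.
- by rewrite orbF; apply/negbTE/negP => ?; lra.
- by apply/idP; lra.
- by rewrite orbF; apply/idP; lra.
- by apply/negbTE/negP => ?; lra.
Qed.

Lemma regret_signed s :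
  regret A (1/2) (signed_instance s) T = (\sum_i err_prob s i)%:E.
Proof.
rewrite /regret (@run_bern _ _ A hA (1/2) _ (signed_mean_in01 s)); congr EFin.
apply: play_sum => [j|t a h]; first by rewrite big1.
rewrite /expected_loss /disagree exchange_big /=; apply: eq_bigr => d _.
rewrite /nb_misclassified -mulr_sumr; congr (_ * _).
rewrite -sum1_card natr_sum big_mkcond /=; apply: eq_bigr => i _.
have := misclassified_signed s d i.
by case: (d i != s i) => e; [rewrite mem_set | rewrite memNset] => //=; rewrite e.
Qed.

Lemma sum_pulls s : \sum_i pulls s i = T%:R.
Proof.
rewrite /pulls /ecost -(@play_sum _ _ A _ (fun _ => 1) _ _ _ (fun _ _ _ => 0)).
- by rewrite play_const ?mulr1 ?addr0 // => j; rewrite addrC subrK.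
- move=> j; rewrite (bigD1 j) //= eqxx big1 ?addr0 // => k /negbTE.
  by rewrite eq_sym => ->.
- by move=> t a h; rewrite big1.
Qed.

Lemma err_prob_flip_ge s i :
  expR (- (8 * Delta i ^+ 2 * (pulls s i + pulls (flip i s) i))) / 2
  <= err_prob s i + err_prob (flip i s) i.
Proof.
rewrite mulrDr /pulls -!ecostZ /err_prob flip_id.
apply: bretagnolle_huber => //; try exact: signed_mean01; try exact: disagree_ge0.
- by move=> j; exact: (bern_kl_signed_flip i s j).
- by move=> j; have := bern_kl_signed_flip i (flip i s) j; rewrite flipK.
- exact: disagree_addN.
Qed.

Lemma pulls_ge0 s i : 0 <= pulls s i.
Proof.
by apply: play_ge0 => // j; have /andP[? ?] := signed_mean_in01 s j; rewrite ?subr_ge0.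
Qed.

Definition avg_pulls (i : 'I_K) : R := (\sum_(s : signs) pulls s i) / #|signs|%:R.

Lemma card_signs_gt0 : (0 < #|signs|)%N.
Proof. by apply/card_gt0P; exists [ffun _ => true]. Qed.

Lemma sum_err_prob_ge i :
  #|signs|%:R * expR (- (16 * avg_pulls i * Delta i ^+ 2)) / 4
  <= \sum_(s : signs) err_prob s i.
Proof.
rewrite /avg_pulls; set N : R := #|signs|%:R.
have N_gt0 : 0 < N by rewrite ltr0n card_signs_gt0.
have flip_sum (F : signs -> R) : \sum_s F (flip i s) = \sum_s F s.
  by rewrite [RHS](reindex_inj (inv_inj (flipK i))).
set z := fun s => - (8 * Delta i ^+ 2 * (pulls s i + pulls (flip i s) i)).
have pair_sum : \sum_s expR (z s) / 2 <= 2 * \sum_s err_prob s i.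
  apply: le_trans (ler_sum _ (fun s _ => err_prob_flip_ge s i)) _.
  by rewrite big_split /= (flip_sum (err_prob^~ i)); lra.
have w_ge0 (s : signs) : 0 <= N^-1 by rewrite invr_ge0 ltW.
have w_sum1 : \sum_(s : signs) N^-1 = 1.
  by rewrite sumr_const -mulr_natr mulVf // gt_eqF.
have := @jensen_expR _ signs (fun _ => N^-1) z w_ge0 w_sum1.
have -> : \sum_s N^-1 * z s = - (16 * ((\sum_s pulls s i) / N) * Delta i ^+ 2).
  rewrite -mulr_sumr /z sumrN -mulr_sumr big_split /= (flip_sum (pulls^~ i)).
  by field; rewrite gt_eqF.
rewrite -mulr_sumr ler_pdivlMl // -mulr_suml in pair_sum *.
clear flip_sum w_ge0 w_sum1; lra.
Qed.

Lemma scrP_le_avg :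
  scrP 16 Delta T <= \sum_i expR (- (16 * avg_pulls i * Delta i ^+ 2)).
Proof.
have N_gt0 : 0 < #|signs|%:R :> R by rewrite ltr0n card_signs_gt0.
apply: ge_inf.
  by exists 0 => _ [x _ <-]; apply: sumr_ge0 => i _; rewrite expR_ge0.
exists avg_pulls => //; split=> [i|].
  by rewrite divr_ge0 ?(ltW N_gt0) ?sumr_ge0 // => s _; exact: pulls_ge0.
rewrite /avg_pulls -mulr_suml exchange_big /=.
under eq_bigr do rewrite sum_pulls.
by rewrite sumr_const -(mulr_natr T%:R) mulfK // gt_eqF.
Qed.

Lemma sum_err_prob_ge_scrP :
  #|signs|%:R * (1/4 * scrP 16 Delta T) <= \sum_(s : signs) \sum_i err_prob s i.
Proof.
have N_gt0 : 0 < #|signs|%:R :> R by rewrite ltr0n card_signs_gt0.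
rewrite exchange_big /=; apply: le_trans (ler_sum _ (fun i _ => sum_err_prob_ge i)).
rewrite -mulr_suml -mulr_sumr.
have := ler_wpM2l (ltW N_gt0) scrP_le_avg; lra.
Qed.

End SignedInstances.

Theorem theorem2 (R : realType) (K : nat) (Delta : 'I_K -> R)
    (hDelta : forall i, 0 < Delta i <= 1/4)
    (A : algorithm R K) (hA : valid_algorithm A)
    (T : nat) (hT : (K <= T)%N) :
  exists (theta : R) (P : 'I_K -> probability R R),
    instance_in Delta theta P /\
    ((1/4 * scrP 16 Delta T)%:E <= regret A theta P T)%E.
Proof.
have [s err_prob_ge] :
    exists s, 1/4 * scrP 16 Delta T <= \sum_i err_prob Delta A T s i.
  exact: exists_ge_of_sum_ge _ _ card_signs_gt0 (sum_err_prob_ge_scrP _ hDelta _ hA T).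
exists (1/2), (signed_instance Delta s); split; first exact: signed_instance_in.
by rewrite regret_signed // lee_fin.
Qed.
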